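(* Let $\mathbb{F}_q$ have prime characteristic $p$. For every integer $k\ge1$, \[\bigcup_{i=1}^k \{p^j : 0\le j\le t_i\}\,D(q^i-1)\ \subseteq\ P(k,\mathbb{F}_q),\] where $t_i=\min\{t\in\mathbb{Z} : p^t\ge\lfloor k/i\rfloor\}$ for $1\le i\le k$.
   Context: A sequence $(a_n)_{n\ge0}$ over $\mathbb{F}_q$ satisfies a linear recurrence of degree $k$ if there are $c_0,\dots,c_{k-1}\in\mathbb{F}_q$, with $c_0\neq0$ (standing assumption), such that $a_{n+k}=\sum_{i=0}^{k-1}c_ia_{n+i}$ for all $n\ge0$; such sequences are purely periodic and $\rho(\mathbf{a})$ is the least $m>0$ with $a_{n+m}=a_n$ for all $n\ge0$. $P(k,\mathbb{F}_q)$ is the set of all $\rho(\mathbf{a})$ for sequences $\mathbf{a}$ satisfying some linear recurrence of degree $k$ over $\mathbb{F}_q$. For $n\in\mathbb{Z}_{>0}$, $D(n)$ is the set of positive divisors of $n$. For sets $S_1,S_2\subseteq\mathbb{Z}$ and $a\in\mathbb{Z}$, $aS_1=\{ax: x\in S_1\}$ and $S_1S_2=\{xy : x\in S_1, y\in S_2\}$. *)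

From HB Require Import structures.
From mathcomp Require Import all_boot all_order all_algebra all_field.
Set Implicit Arguments. Unset Strict Implicit. Unset Printing Implicit Defensive.
Import GRing.Theory.
Local Open Scope ring_scope.

Definition lin_rec (F : fieldType) (k : nat) (c : 'I_k -> F) (a : nat -> F) : Prop :=
  forall n : nat, a (n + k)%N = \sum_(i < k) c i * a (n + i)%N.

Definition is_period (F : fieldType) (a : nat -> F) (m : nat) : Prop :=
  (0 < m)%N /\ forall n : nat, a (n + m)%N = a n.

Definition least_period (F : fieldType) (a : nat -> F) (m : nat) : Prop :=
  is_period a m /\ forall m', is_period a m' -> (m <= m')%N.

Definition in_P (k : nat) (F : fieldType) (m : nat) : Prop :=
  exists (c : 'I_k -> F) (a : nat -> F),
    (forall i : 'I_k, nat_of_ord i = 0%N -> c i != 0) /\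
    lin_rec c a /\ least_period a m.

From HB Require Import structures.
From mathcomp Require Import all_boot all_order all_algebra all_field cyclic.
From mathcomp Require Import zify.
Set Implicit Arguments.
Unset Strict Implicit.
Unset Printing Implicit Defensive.
Import GRing.Theory.
Local Open Scope ring_scope.

(** The sequence [s n] = coefficient of [X^(deg Q - 1)] in [X^n mod Q] has
    period [m] exactly when [Q] divides [X^m - 1], and it satisfies the linear
    recurrence of any monic multiple of [Q].  So if [Q(0) <> 0], [deg Q <= k]
    and [Q | X^m - 1] exactly for the multiples [m] of [N], padding [Q] by a
    power of [X - 1] to degree [k] shows that [N] is in [P(k, F)].

    For [d | q^i - 1], a primitive [d]-th root of unity [a] satisfies
    [a^(q^i) = a], so its Frobenius conjugates show that its minimal polynomial
    [P] over [F_q] has degree at most [i].  Writing [m = p^s m'] with [p] prime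
    to [m'], one has [X^m - 1 = (X^m' - 1)^(p^s)] with [X^m' - 1] separable, so
    [a] is a root of multiplicity exactly [p^s]; hence [P^e | X^m - 1] iff
    [d | m] and [e <= p^s].  With [e = p^(j-1) + 1] (and [e = 1] if [j = 0])
    this means [p^j d | m], and the minimality of [t] gives
    [deg P^e <= e i <= k]. *)

Section ModXnSeq.
Variables (F : fieldType) (Q : {poly F}).

Definition modXn_seq (n : nat) : F := ('X^n %% Q)`_(size Q).-2.

Lemma modXn_seq_mul n g :
  (('X^n * g) %% Q)`_(size Q).-2 = \sum_(j < size g) g`_j * modXn_seq (n + j).
Proof.
rewrite -{1}[g]coefK poly_def mulr_sumr.
rewrite (big_morph (fun p => p %% Q) (modpD Q) (mod0p Q)) coef_sum.
by apply: eq_bigr => j _; rewrite -scalerAr -exprD modpZl coefZ.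
Qed.

Hypothesis Q_neq0 : Q != 0.

Lemma dvdp_modXn_seqP g :
  reflect (forall n, (('X^n * g) %% Q)`_(size Q).-2 = 0) (Q %| g).
Proof.
apply: (iffP idP) => [/dvdpP[r ->] n | g_ann]; first by rewrite mulrA modp_mull coef0.
apply: contraT => Qndvd; pose r := g %% Q.
have r_neq0 : r != 0 by apply: contra Qndvd => /eqP/modp_eq0P.
have lt_r_Q : (size r < size Q)%N by rewrite ltn_modp.
have r_gt0 : (0 < size r)%N by rewrite size_poly_gt0.
pose n := ((size Q).-1 - size r)%N.
have [n_small n_le n_lead] : [/\ (size r + n < size Q)%N, (n <= (size Q).-2)%N
    & ((size Q).-2 - n = (size r).-1)%N].
  (* [size r] and [size Q] carry different canonical instances, which [lia]
     would treat as distinct atoms; generalizing them first avoids this. *)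
  move: r_gt0 lt_r_Q; rewrite /n; move: (size r) (size Q) => a b.
  by rewrite -!subn1; split; lia.
have := g_ann n; rewrite -modp_mul -/r modp_small; last first.
  by rewrite mulrC size_mulXn // addnC.
rewrite coefXnM ifN -?leqNgt // n_lead.
by move/eqP; rewrite lead_coef_eq0 (negbTE r_neq0).
Qed.

Lemma modXn_seq_periodP m :
  (forall n, modXn_seq (n + m) = modXn_seq n) <-> Q %| 'X^m - 1.
Proof.
have shiftE n : modXn_seq (n + m) - modXn_seq n
    = (('X^n * ('X^m - 1)) %% Q)`_(size Q).-2.
  by rewrite mulrBr mulr1 -exprD modpD modpN coefD coefN.
split=> [per | /dvdp_modXn_seqP ann n].
  by apply/dvdp_modXn_seqP => n; rewrite -shiftE per subrr.
by apply/eqP; rewrite -subr_eq0 shiftE ann.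
Qed.

Lemma modXn_seq_lin_rec k (R : {poly F}) :
  R \is monic -> size R = k.+1 -> Q %| R ->
  lin_rec (fun i : 'I_k => - R`_i) modXn_seq.
Proof.
move=> monR szR /dvdp_modXn_seqP ann n.
have := ann n; rewrite modXn_seq_mul szR big_ord_recr /=.
have -> : R`_k = 1 by move/monicP: monR; rewrite /lead_coef szR.
rewrite mul1r => /eqP; rewrite addrC addr_eq0 => /eqP ->.
by rewrite -sumrN; apply: eq_bigr => i _; rewrite mulNr.
Qed.

End ModXnSeq.

Lemma in_P_dvdp_Xn_sub1 k (F : fieldType) (Q : {poly F}) N :
  Q \is monic -> Q`_0 != 0 -> ((size Q).-1 <= k)%N -> (0 < N)%N ->
  (forall m, (0 < m)%N -> (Q %| 'X^m - 1) = (N %| m)%N) -> in_P k F N.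
Proof.
move=> monQ Q0 szQ N_gt0 dvdQ.
have Q_neq0 : Q != 0 by rewrite monic_neq0.
pose R := Q * ('X - 1) ^+ (k - (size Q).-1).
have monR : R \is monic by rewrite monicMl // monic_exp // monicXsubC.
have szR : size R = k.+1.
  rewrite size_Mmonic ?monic_exp ?monicXsubC // size_exp_XsubC.
  by have := size_poly_gt0 Q; rewrite Q_neq0; lia.
have periodE m : (0 < m)%N -> is_period (modXn_seq Q) m <-> (N %| m)%N.
  by move=> m_gt0; rewrite /is_period -dvdQ // -modXn_seq_periodP //; tauto.
exists (fun i : 'I_k => - R`_i), (modXn_seq Q); split; [|split].
- move=> i /= i0; rewrite i0 oppr_eq0 -horner_coef0 hornerM horner_exp.
  rewrite mulf_neq0 ?expf_neq0 ?horner_coef0 //.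
  by rewrite coefB coefX coefC sub0r oppr_eq0 oner_eq0.
- by apply: modXn_seq_lin_rec; rewrite // dvdp_mulIl.
- split; first exact/(periodE N N_gt0).
  move=> m per_m; have m_gt0 := proj1 per_m.
  by apply: (dvdn_leq m_gt0); apply/(periodE m m_gt0).
Qed.

Lemma exprB_pchar (R : comNzRingType) p (x y : R) s : p \in [pchar R] ->
  (x - y) ^+ (p ^ s)%N = x ^+ (p ^ s)%N - y ^+ (p ^ s)%N.
Proof.
move=> pcharRp; have pnat_ps : [pchar R].-nat (p ^ s)%N.
  by rewrite pnatX pnatE ?(pcharf_prime pcharRp) // pcharRp.
by rewrite exprDn_pchar // exprNn_pchar.
Qed.

Lemma mupX (F : fieldType) (x : F) (q : {poly F}) n :
  q != 0 -> mup x (q ^+ n) = (n * mup x q)%N.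
Proof.
move=> q_neq0; elim: n => [|n IHn]; first by rewrite expr0 mupNroot ?root1.
by rewrite exprS mupM ?expf_neq0 // IHn mulSn.
Qed.

Lemma mup_Xn_sub1 (L : fieldType) p (a : L) m : p \in [pchar L] ->
  (0 < m)%N -> a ^+ m = 1 -> mup a ('X^m - 1) = (p ^ logn p m)%N.
Proof.
move=> pcharLp m_gt0 am1; have p_prime := pcharf_prime pcharLp.
have [m' p_cop_m' mE] := pfactor_coprime p_prime m_gt0.
set s := logn p m in mE *.
have m'_neq0 : m'%:R != 0 :> L by rewrite -(dvdn_pcharf pcharLp) -prime_coprime.
have XmE : 'X^m - 1 = ('X^m' - 1) ^+ (p ^ s)%N :> {poly L}.
  by rewrite exprB_pchar ?pchar_poly // -exprM -mE expr1n.
have am'1 : root ('X^m' - 1) a.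
  move/eqP: am1; rewrite mE exprM -subr_eq0 -(expr1n L (p ^ s)%N) -exprB_pchar //.
  by rewrite expf_eq0 rootE !hornerE => /andP[].
have [G XmG] : exists G, 'X^m' - 1 = ('X - a%:P) * G.
  by exists (('X^m' - 1) %/ ('X - a%:P)); rewrite mulrC divpK // dvdp_XsubCl.
have nGa : ~~ root G a.
  by have := separable_Xn_sub_1 m'_neq0; rewrite XmG mulrC separable_root => /andP[].
rewrite XmE mupX; last first.
  by rewrite -size_poly_gt0 size_XnsubC // lt0n; apply: contraNneq m'_neq0 => ->.
by rewrite XmG mupMl // (mup_XsubCX 1) eqxx muln1.
Qed.

Lemma prim_root_exp_dvdp_Xn_sub1 (L : fieldType) p d (a : L) (M : {poly L}) e j m :
  p \in [pchar L] -> d.-primitive_root a -> d%:R != 0 :> L ->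
  (forall n, (M %| 'X^n - 1) = (a ^+ n == 1)) -> root M a ->
  (0 < e)%N -> (forall s, (e <= p ^ s) = (j <= s))%N -> (0 < m)%N ->
  (M ^+ e %| 'X^m - 1) = (p ^ j * d %| m)%N.
Proof.
move=> pcharLp prim_a d_neq0 dvdM Ma e_gt0 eE m_gt0.
have p_prime := pcharf_prime pcharLp.
have cop_pj_d : coprime (p ^ j) d.
  by rewrite coprimeXl // prime_coprime // (dvdn_pcharf pcharLp).
apply/idP/idP => [dvdMe | /dvdnP[r ->]].
- have am1 : a ^+ m = 1.
    by apply/eqP; rewrite -dvdM (dvdp_trans (dvdp_exp e_gt0 (dvdpp M)) dvdMe).
  rewrite Gauss_dvd // (prim_order_dvd prim_a) am1 eqxx andbT pfactor_dvdn // -eE.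
  rewrite -(mup_Xn_sub1 pcharLp m_gt0 am1) mup_geq ?monic_neq0 ?monicXnsubC //.
  by apply: dvdp_trans dvdMe; apply: dvdp_exp2r; rewrite dvdp_XsubCl.
- rewrite mulnCA mulnC exprM -(expr1n {poly L} (p ^ j)%N) -exprB_pchar ?pchar_poly //.
  apply: dvdp_trans (dvdp_exp2l M (_ : e <= p ^ j)%N) (dvdp_exp2r _ _).
    by rewrite eE.
  by rewrite dvdM mulnC exprM (prim_expr_order prim_a) expr1n.
Qed.

Lemma minPoly_dvdp_Xn_sub1 (F : fieldType) (L : fieldExtType F) (K : {subfield L})
    (a : L) n :
  (minPoly K a %| 'X^n - 1) = (a ^+ n == 1).
Proof.
apply/idP/eqP => [dvd_Xn | an1].
  have := root_dvdp dvd_Xn (root_minPoly K a).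
  by rewrite rootE !hornerE subr_eq0 => /eqP.
apply: minPoly_dvdp; first by rewrite rpredB ?rpredX ?polyOverX ?rpred1.
by rewrite rootE !hornerE an1 subrr.
Qed.

Lemma size_minPoly_fixed_expn_card (F : finFieldType) (L : fieldExtType F) (a : L) i :
  (0 < i)%N -> a ^+ (#|F| ^ i) = a -> (size (minPoly 1 a) <= i.+1)%N.
Proof.
move=> i_gt0 a_fix; have [p _ pcharFp] := finPcharP F.
have cardF : #|F| = (p ^ logn p #|F|)%N := card_pprimeChar pcharFp.
pose frob (x : L) := x ^+ #|F|.
have frob_add : zmod_morphism frob.
  by move=> x y; rewrite /frob cardF exprB_pchar // pchar_lalg.
have frob_mul : monoid_morphism frob by split=> [|x y]; rewrite /frob ?expr1n ?exprMn.
pose frobR : {rmorphism L -> L} := HB.pack frob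
  (GRing.isZmodMorphism.Build _ _ frob frob_add)
  (GRing.isMonoidMorphism.Build _ _ frob frob_mul).
have iter_frob n x : iter n frobR x = x ^+ (#|F| ^ n).
  by elim: n => [|n IHn]; rewrite ?expn0 ?expr1 //= IHn /frob -exprM expnSr.
pose conj := traject frobR a i.
have map_conj : perm_eq (map frobR conj) conj.
  have map_traject n x : map frobR (traject frobR x n) = traject frobR (frobR x) n.
    by elim: n x => //= n IHn x; rewrite IHn.
  rewrite map_traject -(perm_cons a) -trajectS.
  by rewrite trajectSr iter_frob a_fix perm_rcons.
pose G := \prod_(z <- conj) ('X - z%:P).
have G_fixed : map_poly frobR G = G.
  rewrite rmorph_prod -[RHS](perm_big _ map_conj) big_map; apply: eq_bigr => z _.
  by rewrite rmorphB /= (map_polyX frobR) (map_polyC frobR).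
have G_over : G \is a polyOver 1%VS.
  apply/polyOverP => n; rewrite Fermat's_little_theorem dimv1 expn1.
  by rewrite -[_ ^+ #|F|]/(frobR _) -coef_map G_fixed.
have /dvdp_leq : minPoly 1 a %| G.
  apply: minPoly_dvdp G_over _; rewrite root_prod_XsubC.
  by rewrite /conj -(prednK i_gt0) trajectS mem_head.
by rewrite size_prod_XsubC size_traject; apply; rewrite monic_neq0 // monic_prod_XsubC.
Qed.

Lemma natf_dvdn_card_expn_sub1_neq0 (F : finFieldType) i d :
  (0 < i)%N -> (d %| #|F| ^ i - 1)%N -> d%:R != 0 :> F.
Proof.
move=> i_gt0 /dvdnP[r dE]; have [p _ pcharFp] := finPcharP F.
have cardF : #|F| = (p ^ logn p #|F|)%N := card_pprimeChar pcharFp.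
have cardF0 : #|F|%:R = 0 :> F.
  apply/eqP; rewrite -(dvdn_pcharf pcharFp); have := finNzRing_gt1 F.
  by rewrite cardF; case: (logn _ _) => // n _; rewrite expnS dvdn_mulr.
have qi_gt0 : (0 < #|F| ^ i)%N by rewrite expn_gt0 (ltnW (finNzRing_gt1 F)).
have : (#|F| ^ i - 1)%:R = - 1 :> F.
  by rewrite natrB // natrX cardF0 expr0n gtn_eqF // sub0r.
apply: contra_eq_neq => d0.
by rewrite dE natrM d0 mulr0 eq_sym oppr_eq0 oner_eq0.
Qed.

Lemma exists_poly_exp_dvdp_Xn_sub1 (F : finFieldType) p i d :
  p \in [pchar F] -> (0 < i)%N -> (d %| #|F| ^ i - 1)%N ->
  exists2 P : {poly F}, [/\ P \is monic, P`_0 != 0 & (size P <= i.+1)%N] &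
    forall e j m, (0 < e)%N -> (forall s, (e <= p ^ s) = (j <= s))%N ->
      (0 < m)%N -> (P ^+ e %| 'X^m - 1) = (p ^ j * d %| m)%N.
Proof.
move=> pcharFp i_gt0 dvd_d.
have d_neq0 := natf_dvdn_card_expn_sub1_neq0 i_gt0 dvd_d.
have d_gt0 : (0 < d)%N by rewrite lt0n; apply: contraNneq d_neq0 => ->.
have Xd_neq0 : ('X^d - 1 : {poly F}) != 0 by rewrite -size_poly_gt0 size_XnsubC.
have [L [rs Drs _]] := FinSplittingFieldFor Xd_neq0.
rewrite rmorphB /= map_polyXn rmorph1 in Drs.
have dL_neq0 : d%:R != 0 :> L by rewrite -(rmorph_nat (in_alg L)) fmorph_eq0.
have /hasP[a _ prim_a] : has d.-primitive_root rs.
  apply: has_prim_root => //.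
  - by apply/allP => z zr; rewrite /root_of_unity (eqp_root Drs) root_prod_XsubC.
  - by rewrite -separable_prod_XsubC -(eqp_separable Drs) separable_Xn_sub_1.
  - by have := eqp_size Drs; rewrite size_XnsubC // size_prod_XsubC => -[->].
have a_fix : a ^+ (#|F| ^ i) = a.
  have qi_gt0 : (0 < #|F| ^ i)%N by rewrite expn_gt0 (ltnW (finNzRing_gt1 F)).
  have a_qi1 : a ^+ (#|F| ^ i - 1) = 1 by apply/eqP; rewrite -(prim_order_dvd prim_a).
  by rewrite -(subnK qi_gt0) addn1 exprSr a_qi1 mul1r.
have /polyOver1P[P PE] := minPolyOver 1 a.
exists P; first split.
- by rewrite -(map_monic (in_alg L)) -PE monic_minPoly.
- rewrite -(fmorph_eq0 (in_alg L)) -coef_map -PE; apply/eqP => M0.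
  have : root ('X^d - 1) (0 : L).
    apply: root_dvdp (_ : minPoly 1 a %| _) _.
      by rewrite minPoly_dvdp_Xn_sub1 (prim_expr_order prim_a).
    by rewrite rootE horner_coef0 M0.
  by rewrite rootE !hornerE expr0n gtn_eqF // sub0r oppr_eq0 oner_eq0.
- by rewrite -(size_map_poly (in_alg L)) -PE size_minPoly_fixed_expn_card.
move=> e j m e_gt0 eE m_gt0.
rewrite -(dvdp_map (in_alg L)) rmorphXn /= -PE rmorphB /= map_polyXn rmorph1.
apply: (prim_root_exp_dvdp_Xn_sub1 _ prim_a dL_neq0 _ (root_minPoly 1 a)) => //.
  by rewrite pchar_lalg.
exact: minPoly_dvdp_Xn_sub1.
Qed.

Theorem theorem3p3 (F : finFieldType) (p : nat) (hp : (p \in [pchar F])%R)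
  (k : nat) (hk : (0 < k)%N)
  (i : nat) (hi : (0 < i <= k)%N)
  (t : nat) (ht : (k %/ i <= p ^ t)%N)
  (htmin : forall t' : nat, (k %/ i <= p ^ t')%N -> (t <= t')%N)
  (j : nat) (hj : (j <= t)%N)
  (d : nat) (hd : (d %| #|F| ^ i - 1)%N) :
  in_P k F (p ^ j * d)%N.
Proof.
have /andP[i_gt0 le_i_k] := hi.
have p_gt1 : (1 < p)%N := prime_gt1 (pcharf_prime hp).
have d_gt0 : (0 < d)%N.
  by rewrite lt0n; apply: contraNneq (natf_dvdn_card_expn_sub1_neq0 i_gt0 hd) => ->.
have [P [monP P0 szP] dvdP] := exists_poly_exp_dvdp_Xn_sub1 hp i_gt0 hd.
pose e := if j is j'.+1 then (p ^ j').+1 else 1%N.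
have e_gt0 : (0 < e)%N by case: (j) @e.
have eE s : (e <= p ^ s)%N = (j <= s)%N.
  rewrite /e; case: (j) => [|j']; first by rewrite expn_gt0 (ltnW p_gt1).
  by rewrite ltn_exp2l.
have le_ei_k : (e * i <= k)%N.
  rewrite /e; case: (j) hj => [|j'] le_j_t; first by rewrite mul1n.
  have lt_pj' : (p ^ j' < k %/ i)%N.
    by rewrite ltnNge; apply/negP => /htmin; rewrite leqNgt le_j_t.
  by apply: leq_trans (leq_divM k i); rewrite leq_mul2r lt_pj' orbT.
apply: (@in_P_dvdp_Xn_sub1 _ _ (P ^+ e)).
- exact: monic_exp.
- by rewrite -horner_coef0 horner_exp expf_neq0 // horner_coef0.
- rewrite size_exp mulnC; apply: leq_trans le_ei_k.
  by rewrite leq_mul2l -subn1 leq_subLR add1n szP orbT.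
- by rewrite muln_gt0 expn_gt0 (ltnW p_gt1).
- by move=> m m_gt0; exact: dvdP.
Qed.
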